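(* Let $k\ge3$ and $n\ge k+2$, let $\ell=\lceil n/(k+1)\rceil-1$, and let $\mathcal{X}_{n,k}=(Q,\Sigma,\delta)$ with $Q=\{0,\dots,n-1\}$, $\Sigma=\{a_1,\dots,a_k\}$ and $\delta$ defined by: for each $0\le i\le\ell-1$ and $1\le j\le k$, $\delta((k+1)i,a_j)=(k+1)i+j$ and $\delta((k+1)i+1,a_1)=(k+1)(i+1)$; for each $i$ with $(k+1)\ell\le i\le n-2$, $\delta(i,a_1)=i+1$; and $\delta(i,a_j)=0$ for all remaining pairs $(i,a_j)$. Then $\mathcal{X}_{n,k}$ (which is the decoder of a maximal finite prefix code over $\Sigma$) is synchronizing and its reset threshold equals $2\ell+2=2\lceil n/(k+1)\rceil$.
   Context: For a DFA $(Q,\Sigma,\delta)$ with transitions extended to words, a reset word is a word $w$ with $|\{\delta(q,w)\mid q\in Q\}|=1$; the DFA is synchronizing if one exists, and its reset threshold is the length of a shortest reset word. *)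

From mathcomp Require Import all_boot.
Set Implicit Arguments. Unset Strict Implicit. Unset Printing Implicit Defensive.

Definition delta_word (Q S : finType) (d : Q -> S -> Q) (q : Q) (w : seq S) : Q :=
  foldl d q w.

Definition reset_word (Q S : finType) (d : Q -> S -> Q) (w : seq S) : Prop :=
  #|[set delta_word d q w | q : Q]| = 1.

Definition synchronizing (Q S : finType) (d : Q -> S -> Q) : Prop :=
  exists w : seq S, reset_word d w.

Definition reset_threshold_is (Q S : finType) (d : Q -> S -> Q) (m : nat) : Prop :=
  (exists w : seq S, reset_word d w /\ size w = m) /\
  (forall w : seq S, reset_word d w -> m <= size w).

(* ell = ceil(n/(k+1)) - 1 *)
Definition ell (n k : nat) : nat := (n + k) %/ k.+1 - 1.

(* transition on naturals; letter a_j is given by j in 1..k *)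
Definition X_nat (n k q j : nat) : nat :=
  let l := ell n k in
  if (q %% k.+1 == 0) && (q %/ k.+1 < l) then q + j
  else if (q %% k.+1 == 1) && (q %/ k.+1 < l) && (j == 1) then (q %/ k.+1).+1 * k.+1
  else if (k.+1 * l <= q) && (q <= n - 2) && (j == 1) then q.+1
  else 0.

(* Q = 'I_n, letters a_1..a_k represented by a : 'I_k, i.e. a_(a+1).
   The value is always < n; the "%% n" only serves to build an ordinal
   and is the identity (see lemma X_nat_lt). *)
Definition X_delta (n k : nat) (q : 'I_n) (a : 'I_k) : 'I_n :=
  @Ordinal n (X_nat n k q a.+1 %% n)
    (ltn_pmod _ (leq_ltn_trans (leq0n q) (ltn_ord q))).

From mathcomp Require Import all_boot zify.

(* The letter a_1 walks along the spine 0, 1, k+1, k+2, ..., (k+1)(l-1)+1,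
   (k+1)l, ..., n-1, alternating between branch states (k+1)i and stem states
   (k+1)i+1 before running down the tail.  Any other letter sends a branch
   state to a leaf (k+1)i+j, j >= 2, and every other state to 0; every letter
   sends a leaf to 0.

   Upper bound: for a <> a_1 the word a a_1^(2l) a is a reset word.  After a
   every state is 0 or a leaf, after the next a_1 it is at spine position 0 or
   1, after 2l-1 more a_1 at position 2l-1 or 2l (the last stem state or the
   start of the tail), and the final a sends both to 0.

   Lower bound: after any word w of length at most 2l+1 the image still
   contains two distinct states: either the whole spine (w is a power of a_1),
   or 0 together with a leaf, or the spine states at two consecutive positions
   r, r+1 with r+2 <= |w|.  The letter a_1 shifts consecutive spine states
   forward, and another letter maps a branch/stem pair to a leaf and 0, which
   is where the bound on r (keeping r+1 below 2l) is needed. *)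

Set Implicit Arguments.
Unset Strict Implicit.
Unset Printing Implicit Defensive.

Lemma reset_word_eq (Q S : finType) (d : Q -> S -> Q) w p q :
  reset_word d w -> delta_word d p w = delta_word d q w.
Proof.
move=> /eqP/cards1P[c hc].
have im r : delta_word d r w = c by apply/set1P; rewrite -hc imset_f.
by rewrite !im.
Qed.

Lemma reset_word_const (Q S : finType) (d : Q -> S -> Q) w c :
  (forall q, delta_word d q w = c) -> reset_word d w.
Proof.
move=> hc; rewrite /reset_word (_ : [set _ | q : Q] = [set c]) ?cards1 //.
apply/setP => y; rewrite inE; apply/imsetP/eqP => [[q _ ->] //|->].
by exists c; rewrite ?hc.
Qed.

Lemma even_or_odd i : exists m, i = 2 * m \/ i = 2 * m + 1.
Proof. by exists i./2; lia. Qed.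

Section Xnk.

Variables n k : nat.
Hypotheses (k_gt0 : 0 < k) (hn : k + 2 <= n).

Lemma ell_gt0 : 0 < ell n k.
Proof.
rewrite /ell; have : 2 <= (n + k) %/ k.+1 by rewrite leq_divRL //; lia.
lia.
Qed.

Lemma ell_mul_lt : ell n k * k.+1 < n.
Proof.
rewrite /ell mulnBl mul1n; have := leq_divM (n + k) k.+1.
set d := (n + k) %/ k.+1; nia.
Qed.

Lemma X_nat_branch m j : m < ell n k -> X_nat n k (m * k.+1) j = m * k.+1 + j.
Proof. by move=> hm; rewrite /X_nat modnMl mulnK // hm. Qed.

Lemma X_nat_stem m j : m < ell n k ->
  X_nat n k (m * k.+1 + 1) j = if j == 1 then m.+1 * k.+1 else 0.
Proof.
move=> hm; have k1 : 1 < k.+1 by rewrite ltnS.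
rewrite /X_nat modnMDl divnMDl // !(modn_small k1) (divn_small k1) addn0 hm /=.
have -> : (k.+1 * ell n k <= m * k.+1 + 1) = false.
  have : m.+1 * k.+1 <= ell n k * k.+1 by rewrite leq_mul2r hm orbT.
  lia.
by case: (j == 1).
Qed.

Lemma X_nat_tail x j : ell n k * k.+1 <= x ->
  X_nat n k x j = if (x <= n - 2) && (j == 1) then x.+1 else 0.
Proof.
move=> hx; rewrite /X_nat; have -> : x %/ k.+1 < ell n k = false.
  by rewrite ltn_divLR // ltnNge hx.
by rewrite !andbF /= [k.+1 * _]mulnC hx.
Qed.

Definition leaf x := (2 <= x %% k.+1) && (x < ell n k * k.+1).

Lemma leaf_neq0 x : leaf x -> x != 0.
Proof. by case/andP; case: eqP => // ->; rewrite mod0n. Qed.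

Lemma X_nat_leaf x j : leaf x -> X_nat n k x j = 0.
Proof.
case/andP=> hx hxl; rewrite /X_nat.
have [-> ->] : x %% k.+1 == 0 = false /\ x %% k.+1 == 1 = false.
  by split; apply/eqP; lia.
by have -> : (k.+1 * ell n k <= x) = false by lia.
Qed.

Lemma leaf_branch m j : m < ell n k -> 2 <= j <= k -> leaf (m * k.+1 + j).
Proof.
move=> hm /andP[j2 jk]; rewrite /leaf modnMDl modn_small ?ltnS // j2 /=.
have : m.+1 * k.+1 <= ell n k * k.+1 by rewrite leq_mul2r hm orbT.
lia.
Qed.

Lemma X_nat_big_letter x j : 2 <= j <= k ->
  X_nat n k x j = 0 \/ leaf (X_nat n k x j).
Proof.
move=> hj; rewrite /X_nat; case: ifP => [/andP[/eqP x0 hx]|_].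
  by right; rewrite {1}(divn_eq x k.+1) x0 addn0; apply: leaf_branch.
by left; rewrite (_ : (j == 1) = false) ?andbF //; apply/eqP; lia.
Qed.

Lemma X_nat_lt x j : x < n -> 1 <= j <= k -> X_nat n k x j < n.
Proof.
move=> hx /andP[j1 jk]; have hl := ell_mul_lt; rewrite /X_nat.
case: ifP => [/andP[/eqP x0 hq]|_].
  have ex : x = x %/ k.+1 * k.+1 by rewrite {1}(divn_eq x k.+1) x0 addn0.
  have : (x %/ k.+1).+1 * k.+1 <= ell n k * k.+1 by rewrite leq_mul2r hq orbT.
  lia.
case: ifP => [/andP[/andP[_ hq] _]|_].
  by apply: leq_ltn_trans hl; rewrite leq_mul2r hq orbT.
by case: ifP => [/andP[/andP[_ ?] _]|_]; lia.
Qed.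

Lemma big_letter (a : 'I_k) : 0 < a -> 2 <= a.+1 <= k.
Proof. by move=> a0; rewrite ltnS a0 ltn_ord. Qed.

Definition run x (w : seq 'I_k) : nat :=
  foldl (fun y (a : 'I_k) => X_nat n k y a.+1) x w.

Lemma delta_word_val (q : 'I_n) w :
  val (delta_word (@X_delta n k) q w) = run q w.
Proof.
rewrite /delta_word /run; elim: w q => [|a w IH] q //=.
rewrite IH /= modn_small //; apply: X_nat_lt => //; have := ltn_ord a; lia.
Qed.

Lemma run_rcons x w a : run x (rcons w a) = X_nat n k (run x w) a.+1.
Proof. by rewrite /run foldl_rcons. Qed.

Lemma run_cat x u v : run x (u ++ v) = run (run x u) v.
Proof. by rewrite /run foldl_cat. Qed.

Definition in_image w y := exists2 x, x < n & run x w = y.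

Lemma in_image_rcons w a y :
  in_image w y -> in_image (rcons w a) (X_nat n k y a.+1).
Proof. by case=> x hx ex; exists x; rewrite // run_rcons ex. Qed.

Lemma reset_word_image w y z : reset_word (@X_delta n k) w ->
  in_image w y -> in_image w z -> y = z.
Proof.
move=> hw [x hx <-] [x' hx' <-].
rewrite -(delta_word_val (Ordinal hx)) -(delta_word_val (Ordinal hx')).
by rewrite (reset_word_eq _ (Ordinal hx') hw).
Qed.

(* [spine i] is the state reached from 0 by a_1^i, for i <= spine_end. *)
Definition spine i :=
  if i < 2 * ell n k then i %/ 2 * k.+1 + i %% 2
  else ell n k * k.+1 + (i - 2 * ell n k).

Definition spine_end := 2 * ell n k + (n.-1 - ell n k * k.+1).

Lemma spine_end_ge : 2 * ell n k <= spine_end.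
Proof. exact: leq_addr. Qed.

Lemma spine_even m : m < ell n k -> spine (2 * m) = m * k.+1.
Proof.
move=> hm; rewrite /spine ifT; last lia.
by rewrite mulKn // (_ : (2 * m) %% 2 = 0) ?addn0 //; lia.
Qed.

Lemma spine_odd m : m < ell n k -> spine (2 * m + 1) = m * k.+1 + 1.
Proof.
move=> hm; rewrite /spine ifT; last lia.
by have [-> ->] : (2 * m + 1) %/ 2 = m /\ (2 * m + 1) %% 2 = 1 by lia.
Qed.

Lemma spine_tail i : 2 * ell n k <= i ->
  spine i = ell n k * k.+1 + (i - 2 * ell n k).
Proof. by move=> hi; rewrite /spine ltnNge hi. Qed.

Lemma spine0 : spine 0 = 0.
Proof. by have := spine_even ell_gt0; rewrite mul0n. Qed.

Lemma spine1 : spine 1 = 1.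
Proof. by have := spine_odd ell_gt0; rewrite mul0n. Qed.

Lemma spine_endE : spine spine_end = n.-1.
Proof. have := ell_mul_lt; rewrite spine_tail /spine_end; lia. Qed.

Lemma spine_ltS i : spine i < spine i.+1.
Proof.
have [m [->|->]] := even_or_odd i.
- case: (ltnP m (ell n k)) => hm.
    rewrite spine_even // (_ : (2 * m).+1 = 2 * m + 1) ?spine_odd //; lia.
  by rewrite !spine_tail; lia.
- rewrite (_ : (2 * m + 1).+1 = 2 * m.+1); last lia.
  case: (ltnP m.+1 (ell n k)) => hm.
    by rewrite spine_odd ?spine_even ?mulSn; lia.
  case: (ltnP m (ell n k)) => hm'.
    rewrite spine_odd // spine_tail // (_ : ell n k = m.+1) ?mulSn; lia.
  by rewrite !spine_tail; lia.
Qed.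

Lemma spine_lt i : i <= spine_end -> spine i < n.
Proof.
move=> hi; rewrite -[n]prednK ?ltnS -?spine_endE; last lia.
by apply: (homo_leq leqnn leq_trans) hi => j; apply/ltnW/spine_ltS.
Qed.

Lemma X_nat_spine i : i < spine_end -> X_nat n k (spine i) 1 = spine i.+1.
Proof.
move=> hi; have hl := ell_mul_lt.
case: (ltnP i (2 * ell n k)) => hil; last first.
  rewrite spine_tail // X_nat_tail ?leq_addr // spine_tail; last lia.
  rewrite ifT; last (apply/andP; split => //; rewrite /spine_end in hi; lia).
  lia.
have [m [ei|ei]] := even_or_odd i; subst i.
  rewrite spine_even ?X_nat_branch; try lia.
  by rewrite (_ : (2 * m).+1 = 2 * m + 1) ?spine_odd //; lia.
rewrite spine_odd ?X_nat_stem //; try lia.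
rewrite (_ : (2 * m + 1).+1 = 2 * m.+1); last lia.
case: (ltnP m.+1 (ell n k)) => hm; first by rewrite spine_even.
have eml : ell n k = m.+1 by lia.
by rewrite spine_tail eml ?subnn ?addn0 // -eml.
Qed.

Lemma X_nat_spine_end j : X_nat n k (spine spine_end) j = 0.
Proof.
have hl := ell_mul_lt; rewrite spine_endE X_nat_tail; last lia.
by rewrite ifF //; apply/negbTE; rewrite negb_and; apply/orP; left; lia.
Qed.

Lemma run_spine (a : 'I_k) i t : val a = 0 -> i + t <= spine_end ->
  run (spine i) (nseq t a) = spine (i + t).
Proof.
move=> a0; elim: t i => [|t IH] i hi; first by rewrite addn0.
by rewrite /= a0 X_nat_spine ?IH ?addSnnS //; lia.
Qed.

Lemma in_image_rcons_spine w (a : 'I_k) i : val a = 0 -> i < spine_end ->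
  in_image w (spine i) -> in_image (rcons w a) (spine i.+1).
Proof. by move=> a0 hi /(in_image_rcons a); rewrite a0 X_nat_spine. Qed.

Lemma X_nat_spine_odd m j : m < ell n k -> j != 1 ->
  X_nat n k (spine (2 * m + 1)) j = 0.
Proof. by move=> hm /negbTE hj; rewrite spine_odd // X_nat_stem // hj. Qed.

Lemma leaf_X_nat_spine_even m j : m < ell n k -> 2 <= j <= k ->
  leaf (X_nat n k (spine (2 * m)) j).
Proof.
by move=> hm hj; rewrite spine_even // X_nat_branch //; apply: leaf_branch.
Qed.

Definition zero_and_leaf w := in_image w 0 /\ exists2 y, in_image w y & leaf y.

Lemma zero_and_leaf_rcons w (a : 'I_k) y z : in_image w y -> in_image w z ->
  X_nat n k y a.+1 = 0 -> leaf (X_nat n k z a.+1) -> zero_and_leaf (rcons w a).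
Proof.
move=> /(in_image_rcons a) hy /(in_image_rcons a) hz y0 zleaf.
by split; [rewrite -y0 | exists (X_nat n k z a.+1)].
Qed.

Lemma zero_and_leaf_big w (a : 'I_k) r : 0 < a -> r.+1 < 2 * ell n k ->
  in_image w (spine r) -> in_image w (spine r.+1) -> zero_and_leaf (rcons w a).
Proof.
move=> a0; have ha := big_letter a0.
have [m [->|->]] := even_or_odd r => hr hz hy.
- rewrite (_ : (2 * m).+1 = 2 * m + 1) in hy; last lia.
  apply: (zero_and_leaf_rcons (a := a) hy hz).
    by apply: X_nat_spine_odd; lia.
  by apply: leaf_X_nat_spine_even; lia.
- rewrite (_ : (2 * m + 1).+1 = 2 * m.+1) in hy; last lia.
  apply: (zero_and_leaf_rcons (a := a) hz hy).
    by apply: X_nat_spine_odd; lia.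
  by apply: leaf_X_nat_spine_even; lia.
Qed.

Definition unsynced w :=
  [\/ forall i, i <= spine_end -> in_image w (spine i),
      0 < size w /\ zero_and_leaf w |
      exists2 r, r.+2 <= size w & in_image w (spine r) /\ in_image w (spine r.+1)].

Lemma unsynced_rcons_a1 w (a : 'I_k) : val a = 0 -> size w <= 2 * ell n k ->
  unsynced w -> unsynced (rcons w a).
Proof.
move=> a0 hw; have hend := spine_end_ge.
case=> [hsp | [w0 [h0 [y hy yleaf]]] | [r hr [hr0 hr1]]].
- apply: Or31 => -[|i] hi.
    by have := in_image_rcons a (hsp _ (leqnn _)); rewrite a0 X_nat_spine_end spine0.
  by apply: in_image_rcons_spine => //; apply: hsp; apply: ltnW.
- apply: Or33; exists 0; first by rewrite size_rcons.
  split; last by rewrite -spine0 in h0; apply: in_image_rcons_spine => //; lia.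
  by have := in_image_rcons a hy; rewrite a0 X_nat_leaf // spine0.
- apply: Or33; exists r.+1; first by rewrite size_rcons.
  by split; apply: in_image_rcons_spine => //; lia.
Qed.

Lemma unsynced_rcons_big w (a : 'I_k) : 0 < a -> size w <= 2 * ell n k ->
  unsynced w -> unsynced (rcons w a).
Proof.
move=> a0 hw hu; apply: Or32; split; first by rewrite size_rcons.
have l0 := ell_gt0; have ha := big_letter a0.
case: hu => [hsp | [_ [h0 [y hy yleaf]]] | [r hr [hr0 hr1]]].
- have hend := spine_end_ge.
  by apply: (zero_and_leaf_big (r := 0) a0); [lia | apply: hsp; lia..].
- rewrite -spine0 -(muln0 2) in h0.
  apply: (zero_and_leaf_rcons (a := a) hy h0); first exact: X_nat_leaf.
  exact: leaf_X_nat_spine_even.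
- by apply: (zero_and_leaf_big (r := r)) => //; lia.
Qed.

Lemma unsynced_short w : size w <= 2 * ell n k + 1 -> unsynced w.
Proof.
elim/last_ind: w => [_ | w a IH].
  by apply: Or31 => i hi; exists (spine i); rewrite ?spine_lt.
rewrite size_rcons addn1 ltnS => hw; have hu := IH (leq_trans hw (leq_addr _ _)).
by case: (posnP a) => [a0|a0]; [apply: unsynced_rcons_a1 | apply: unsynced_rcons_big].
Qed.

Lemma reset_word_size w : reset_word (@X_delta n k) w -> 2 * ell n k + 2 <= size w.
Proof.
move=> hw; rewrite leqNgt; apply/negP; rewrite addn2 ltnS -addn1 => /unsynced_short.
have apart y z : in_image w y -> in_image w z -> y != z -> False.
  by move=> hy hz /eqP; apply; apply: reset_word_image hw hy hz.
have l0 := ell_gt0; have hend := spine_end_ge.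
case=> [hsp | [_ [h0 [y hy /leaf_neq0 yleaf]]] | [r _ [hr0 hr1]]].
- by apply: (apart _ _ (hsp 0 _) (hsp 1 _)); rewrite ?spine0 ?spine1 //; lia.
- by apply: (apart _ _ h0 hy); rewrite eq_sym.
- by apply: (apart _ _ hr0 hr1); rewrite neq_ltn spine_ltS.
Qed.

Definition sync_word (a1 a : 'I_k) := a :: nseq (2 * ell n k) a1 ++ [:: a].

Lemma run_sync_word (a1 a : 'I_k) x : val a1 = 0 -> 0 < a ->
  run x (sync_word a1 a) = 0.
Proof.
move=> a10 a0; have l0 := ell_gt0; have hl := ell_mul_lt.
have hend := spine_end_ge.
have ha := big_letter a0.
rewrite /sync_word -cat1s run_cat (_ : 2 * ell n k = (2 * ell n k).-1.+1); last lia.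
rewrite /= -/(run _ _) a10 run_cat.
have [-> | xleaf] := X_nat_big_letter x ha.
  rewrite -{1}spine0 X_nat_spine ?run_spine; try lia.
  rewrite spine_tail; last lia.
  by rewrite /run /= X_nat_tail ?leq_addr // eqSS eqn0Ngt a0 andbF.
rewrite X_nat_leaf // -{1}spine0 run_spine //; last lia.
rewrite (_ : 0 + _ = 2 * (ell n k).-1 + 1); last lia.
rewrite /run /= X_nat_spine_odd //; first lia.
by rewrite eqSS eqn0Ngt a0.
Qed.

Lemma sync_word_reset (a1 a : 'I_k) : val a1 = 0 -> 0 < a ->
  reset_word (@X_delta n k) (sync_word a1 a).
Proof.
move=> a10 a0; have n0 : 0 < n by lia.
apply: (reset_word_const (c := Ordinal n0)) => q; apply: val_inj.
by rewrite delta_word_val run_sync_word.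
Qed.

Lemma size_sync_word (a1 a : 'I_k) : size (sync_word a1 a) = 2 * ell n k + 2.
Proof. by rewrite /sync_word /= size_cat size_nseq addn1 addn2. Qed.

End Xnk.

Theorem theorem7 (n k : nat) (hk : 3 <= k) (hn : k + 2 <= n) :
  synchronizing (@X_delta n k) /\
  reset_threshold_is (@X_delta n k) (2 * ell n k + 2).
Proof.
have k1 : 1 < k := ltnW hk.
have k0 : 0 < k := ltnW k1.
pose w := sync_word n (Ordinal k0) (Ordinal k1).
have hw : reset_word (@X_delta n k) w by apply: sync_word_reset.
split; first by exists w.
split; first by exists w; rewrite size_sync_word.
by move=> w'; apply: reset_word_size.
Qed.
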